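(* Let $n\in\mathbb N$ (positive integer). In the vertex operator algebra $N_2(n-2,0)$ the vector $$v_{2,n}=\sum_{t=0}^{2n}\frac1{t!}\,e_{\epsilon_1-\epsilon_3}(-1)^t\,e_{\epsilon_2-\epsilon_3}(-1)^{2n-t}\,f_{\epsilon_1-\epsilon_2}(0)^t\,e_{\epsilon_1-\epsilon_2}(-1)^n\mathbf 1$$ is a singular vector.
   Context: $\mathfrak g=\mathfrak{sl}_3(\mathbb C)$ with Cartan subalgebra of traceless diagonal matrices, simple roots $\alpha_1=\epsilon_1-\epsilon_2$, $\alpha_2=\epsilon_2-\epsilon_3$, highest root $\theta=\epsilon_1-\epsilon_3$. Root vectors: $e_{\epsilon_1-\epsilon_2}=E_{12}$, $e_{\epsilon_2-\epsilon_3}=E_{23}$, $e_{\epsilon_1-\epsilon_3}=-E_{13}$, $f_{\epsilon_1-\epsilon_2}=E_{21}$, $f_{\epsilon_2-\epsilon_3}=E_{32}$, $f_{\epsilon_1-\epsilon_3}=-E_{31}$ (so $[e_{\epsilon_1-\epsilon_2},e_{\epsilon_2-\epsilon_3}]=-e_{\epsilon_1-\epsilon_3}$). The affine Lie algebra $\hat{\mathfrak g}=\mathfrak g\otimes\mathbb C[t,t^{-1}]\oplus\mathbb Cc$ has bracket $[x(m),y(n)]=[x,y](m+n)+m\delta_{m+n,0}\operatorname{tr}(xy)c$, $x(m)=x\otimes t^m$. $N_2(k,0)=U(\hat{\mathfrak g})\otimes_{U(\mathfrak g\otimes\mathbb C[t]\oplus\mathbb Cc)}\mathbb C$ with $\mathfrak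 g\otimes\mathbb C[t]$ acting by $0$ and $c$ by $k$; it is a vertex operator algebra for $k\neq -3$, with vacuum $\mathbf 1=1\otimes 1$. A singular vector is a weight vector annihilated by $\mathfrak n_+\otimes 1$ and $\mathfrak g\otimes t\mathbb C[t]$ (equivalently by $e_{\alpha_1}(0),e_{\alpha_2}(0),f_\theta(1)$). *)

From HB Require Import structures.
From mathcomp Require Import all_boot all_order all_algebra.
From mathcomp Require Import reals.
From mathcomp Require Import complex.
Set Implicit Arguments. Unset Strict Implicit. Unset Printing Implicit Defensive.
Import Order.TTheory GRing.Theory Num.Theory.
Local Open Scope ring_scope.

Definition CC (R : realType) := R[i].

Section Sl3.
Variable R : realType.
Local Notation C := (CC R).

Definition in_sl3 (x : 'M[C]_3) : Prop := \tr x = 0.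
Definition lie_br (x y : 'M[C]_3) : 'M[C]_3 := x *m y - y *m x.

Definition in_cartan (h : 'M[C]_3) : Prop :=
  in_sl3 h /\ forall i j : 'I_3, i != j -> h i j = 0.
Definition in_nplus (x : 'M[C]_3) : Prop :=
  forall i j : 'I_3, (j <= i)%N -> x i j = 0.

Definition i0 : 'I_3 := @Ordinal 3 0 isT.
Definition i1 : 'I_3 := @Ordinal 3 1 isT.
Definition i2 : 'I_3 := @Ordinal 3 2 isT.

(* Root vectors, with the sign conventions of the paper. *)
Definition e12 : 'M[C]_3 := delta_mx i0 i1.
Definition e23 : 'M[C]_3 := delta_mx i1 i2.
Definition e13 : 'M[C]_3 := - delta_mx i0 i2.
Definition f12 : 'M[C]_3 := delta_mx i1 i0.
Definition f23 : 'M[C]_3 := delta_mx i2 i1.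
Definition f13 : 'M[C]_3 := - delta_mx i2 i0.

(* A module over the affine Lie algebra  g (x) C[t,t^-1] (+) C c  on which the
   central element c acts by the scalar k.  act x m  is the operator of x(m)=x (x) t^m. *)
Definition affine_module (k : C) (M : lmodType C) (act : 'M[C]_3 -> int -> M -> M)
  : Prop :=
  [/\ (forall (a : C) (x y : 'M[C]_3) (m : int) (v : M), in_sl3 x -> in_sl3 y ->
         act (a *: x + y) m v = a *: act x m v + act y m v),
      (forall (a : C) (x : 'M[C]_3) (m : int) (u v : M), in_sl3 x ->
         act x m (a *: u + v) = a *: act x m u + act x m v) &
      (forall (x y : 'M[C]_3) (m n : int) (v : M), in_sl3 x -> in_sl3 y ->
         act x m (act y n v) - act y n (act x m v)
         = act (lie_br x y) (m + n) v
           + ((m%:~R * (if m + n == 0 then 1 else 0) * \tr (x *m y) * k) : C) *: v)].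

Definition vacuum_like (M : lmodType C) (act : 'M[C]_3 -> int -> M -> M) (w : M)
  : Prop := forall (x : 'M[C]_3) (m : int), in_sl3 x -> 0 <= m -> act x m w = 0.

Definition singular (M : lmodType C) (act : 'M[C]_3 -> int -> M -> M) (v : M)
  : Prop :=
  [/\ exists lam : 'M[C]_3 -> C, forall h, in_cartan h -> act h 0 v = lam h *: v,
      (forall x, in_nplus x -> act x 0 v = 0) &
      (forall (x : 'M[C]_3) (m : int), in_sl3 x -> 0 < m -> act x m v = 0)].

Definition v2n (M : lmodType C) (act : 'M[C]_3 -> int -> M -> M) (n : nat) (w : M)
  : M :=
  \sum_(t < (2 * n).+1)
     ((t`!)%:R)^-1 *:
       iter t (act e13 (-1)) (iter (2 * n - t) (act e23 (-1))
         (iter t (act f12 0) (iter n (act e12 (-1)) w))).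

End Sl3.

(* The operators e12(0), e23(0) and f13(1) generate n_+ (x) 1 together with
   g (x) t C[t] (sl_3 is perfect), so it suffices that each of them kills
   v_{2,n}.  Each one sends the t-th summand of v_{2,n} to a combination of two
   neighbouring PBW monomials, computed with sl_2 commutation formulas; once
   divided by t! these combinations telescope.  For e12(0) and f13(1) the
   boundary terms carry the factors t and 2n+1-t (for f13(1) this is where the
   level n-2 enters); for e23(0) the boundary term contains
   f12(0)^(2n) e12(-1)^(n-1) 1, which vanishes because ad(f12)^3 e12 = 0.
   Each monomial is a weight vector of the same weight. *)

From HB Require Import structures.
From mathcomp Require Import all_boot all_order all_algebra.
From mathcomp Require Import reals complex.
From mathcomp Require Import ring zify.
Import Order.TTheory GRing.Theory Num.Theory.
Local Open Scope ring_scope.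
Set Implicit Arguments. Unset Strict Implicit.

Section LinearOperator.
Variables (K : pzRingType) (V : lmodType K) (f : V -> V).
Hypothesis f_lin : linear f.

Lemma lin_opB u v : f (u - v) = f u - f v.
Proof. exact: (zmod_morphism_linear (s := *:%R) f_lin). Qed.

Lemma lin_op0 : f 0 = 0.
Proof. by have := lin_opB 0 0; rewrite !subrr. Qed.

Lemma lin_opN u : f (- u) = - f u.
Proof. by rewrite -sub0r lin_opB lin_op0 sub0r. Qed.

Lemma lin_opD u v : f (u + v) = f u + f v.
Proof. by have := f_lin 1 u v; rewrite !scale1r. Qed.

Lemma lin_opZ a u : f (a *: u) = a *: f u.
Proof. exact: (scalable_linear (s := *:%R) f_lin). Qed.

Lemma lin_op_sum n (F : 'I_n -> V) : f (\sum_(i < n) F i) = \sum_(i < n) f (F i).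
Proof. exact: (big_morph f lin_opD lin_op0). Qed.

Lemma linear_iter j : linear (iter j f).
Proof. by elim: j => [|j IH] a u v //=; rewrite IH f_lin. Qed.

Lemma lin_op_iter0 j : iter j f 0 = 0.
Proof. by elim: j => //= j ->; exact: lin_op0. Qed.

End LinearOperator.

Section IteratedCommutators.
Variables (K : comPzRingType) (V : lmodType K).
Implicit Types (D X Y H : V -> V) (u : V).

Lemma iter_commute D X j u :
  (forall u, D (X u) = X (D u)) -> D (iter j X u) = iter j X (D u).
Proof. by move=> DX; elim: j => //= j IH; rewrite DX IH. Qed.

Lemma scale_natr_iter_pred X j (c : K) u :
  (j%:R * c) *: X (iter j.-1 X u) = (j%:R * c) *: iter j X u.
Proof. by case: j => [|j] //; rewrite !mul0r !scale0r. Qed.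

Lemma commutator_iter D X Y j u : linear X ->
  (forall u, D (X u) = X (D u) + Y u) -> (forall u, Y (X u) = X (Y u)) ->
  D (iter j X u) = iter j X (D u) + j%:R *: iter j.-1 X (Y u).
Proof.
move=> X_lin DX YX; elim: j => [|j IH] /=; first by rewrite scale0r addr0.
rewrite DX IH (lin_opD X_lin) (lin_opZ X_lin) (iter_commute _ _ YX) -addrA.
congr (_ + _).
by rewrite -[j%:R]mulr1 scale_natr_iter_pred mulr1 -natr1 scalerDl scale1r.
Qed.

Lemma iter_commutator D X X1 X2 m u : linear D ->
  (forall u, D (X u) = X (D u) + X1 u) ->
  (forall u, D (X1 u) = X1 (D u) + X2 u) ->
  (forall u, D (X2 u) = X2 (D u)) ->
  iter m D (X u) = X (iter m D u) + m%:R *: X1 (iter m.-1 D u)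
                   + 'C(m, 2%N)%:R *: X2 (iter m.-2 D u).
Proof.
move=> D_lin DX DX1 DX2; elim: m => [|m IH]; first by rewrite !scale0r !addr0.
rewrite iterS IH !(lin_opD D_lin) !(lin_opZ D_lin) DX DX1 DX2.
case: m {IH} => [|[|m]] /=.
- by rewrite !bin_small // !scale0r !addr0 scale1r.
- by rewrite bin_small // binn scale0r addr0 !scaler_nat mulr2n mulr1n !addrA.
- set a := X _; set b := X1 _; set c := X2 _.
  have -> : 'C(m.+3, 2) = ('C(m.+2, 2) + m.+2)%N by rewrite binS bin1.
  have -> : m.+3%:R = m.+2%:R + 1 :> K by rewrite natr1.
  rewrite natrD [(_ + 1) *: _]scalerDl [(_ + m.+2%:R) *: _]scalerDl.
  rewrite scale1r [_ *: (b + c)]scalerDr -!addrA.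
  by congr (_ + _); rewrite addrCA (addrC (_ *: c)).
Qed.

Lemma eigen_iter H X (c mu : K) j u : linear X ->
  (forall u, H (X u) = X (H u) + c *: X u) -> H u = mu *: u ->
  H (iter j X u) = (mu + j%:R * c) *: iter j X u.
Proof.
move=> X_lin HX Hu; elim: j => [|j IH] /=; first by rewrite Hu mul0r addr0.
by rewrite HX IH (lin_opZ X_lin) -scalerDl -natr1 mulrDl mul1r addrA.
Qed.

Lemma sl2_commutator_iter D X H (mu : K) t u : linear X ->
  (forall u, D (X u) = X (D u) + H u) ->
  (forall u, H (X u) = X (H u) - 2 *: X u) -> H u = mu *: u ->
  D (iter t X u) = iter t X (D u) + (t%:R * (mu - t%:R + 1)) *: iter t.-1 X u.
Proof.
move=> X_lin DX HX Hu.
have HX' v : H (X v) = X (H v) + (- 2) *: X v by rewrite HX scaleNr.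
elim: t => [|t IH] /=; first by rewrite mul0r scale0r addr0.
rewrite DX IH (lin_opD X_lin) (lin_opZ X_lin) scale_natr_iter_pred.
rewrite (eigen_iter _ X_lin HX' Hu).
by rewrite -addrA -scalerDl -natr1; congr (_ + _ *: _); ring.
Qed.

End IteratedCommutators.

Lemma telescope_sum_eq0 (V : zmodType) N (u : 'I_N -> V) (f : nat -> V) :
  f 0%N = 0 -> f N = 0 -> (forall t : 'I_N, u t = f t.+1 - f t) ->
  \sum_(t < N) u t = 0.
Proof.
move=> f0 fN uf; rewrite (eq_bigr _ (fun t _ => uf t)).
by rewrite -(big_mkord xpredT (fun t => f t.+1 - f t)) telescope_sumr // fN f0 subrr.
Qed.

Lemma natr_invfactS (F : numFieldType) t :
  (t.+1`!)%:R^-1 * t.+1%:R = (t`!)%:R^-1 :> F.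
Proof. by rewrite factS natrM invfM mulrAC mulVf ?mul1r // pnatr_eq0. Qed.

Lemma ord3P (i : 'I_3) : [\/ i = i0, i = i1 | i = i2].
Proof.
by case: i => [[|[|[|//]]] ?]; [constructor 1 | constructor 2 | constructor 3];
  apply: val_inj.
Qed.

Lemma sum3 (V : nmodType) (F : 'I_3 -> V) : \sum_(i < 3) F i = F i0 + F i1 + F i2.
Proof.
by rewrite !big_ord_recr big_ord0 /= add0r; congr (_ + _ + _); congr F; apply: val_inj.
Qed.

Section Sl3.
Variable R : realType.
Local Notation C := (CC R).
Local Notation e12 := (e12 R). Local Notation e23 := (e23 R).
Local Notation e13 := (e13 R). Local Notation f12 := (f12 R).
Local Notation f23 := (f23 R). Local Notation f13 := (f13 R).
Implicit Types x y h : 'M[C]_3.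

Definition h12 : 'M[C]_3 := delta_mx i0 i0 - delta_mx i1 i1.
Definition h23 : 'M[C]_3 := delta_mx i1 i1 - delta_mx i2 i2.
Definition h13 : 'M[C]_3 := delta_mx i0 i0 - delta_mx i2 i2.

Ltac sl3_unfold :=
  rewrite /lie_br /in_sl3 /mxtrace /e12 /e23 /e13 /f12 /f23 /f13 /h12 /h23 /h13.
Ltac sl3_mx := sl3_unfold; apply/matrixP => i j;
  have [->|->|->] := ord3P i; have [->|->|->] := ord3P j;
  rewrite ?mxE ?sum3 ?mxE /= ?mulr1n ?mulr0n; ring.
Ltac sl3_tr := sl3_unfold; rewrite ?sum3 ?mxE ?sum3 ?mxE /= ?mulr1n ?mulr0n; ring.

Lemma in_sl3_lie_br x y : in_sl3 (lie_br x y).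
Proof. by rewrite /in_sl3 /lie_br raddfB /= mxtrace_mulC subrr. Qed.

Lemma in_sl3_addZ a x y : in_sl3 x -> in_sl3 y -> in_sl3 (a *: x + y).
Proof. by rewrite /in_sl3 raddfD /= linearZ /= => -> ->; rewrite mulr0 addr0. Qed.

Lemma in_sl3Z a x : in_sl3 x -> in_sl3 (a *: x).
Proof. by rewrite /in_sl3 linearZ /= => ->; rewrite mulr0. Qed.

Lemma in_sl3_e12 : in_sl3 e12. Proof. sl3_tr. Qed.
Lemma in_sl3_e23 : in_sl3 e23. Proof. sl3_tr. Qed.
Lemma in_sl3_e13 : in_sl3 e13. Proof. sl3_tr. Qed.
Lemma in_sl3_f12 : in_sl3 f12. Proof. sl3_tr. Qed.
Lemma in_sl3_f23 : in_sl3 f23. Proof. sl3_tr. Qed.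
Lemma in_sl3_f13 : in_sl3 f13. Proof. sl3_tr. Qed.
Lemma in_sl3_h12 : in_sl3 h12. Proof. sl3_tr. Qed.
Lemma in_sl3_h23 : in_sl3 h23. Proof. sl3_tr. Qed.
Lemma in_sl3_h13 : in_sl3 h13. Proof. sl3_tr. Qed.

Ltac offdiag0 := move=> i j;
  have [->|->|->] := ord3P i; have [->|->|->] := ord3P j; rewrite // !mxE /= subrr.

Lemma in_cartan_h12 : in_cartan h12.
Proof. by split; [exact: in_sl3_h12 | offdiag0]. Qed.
Lemma in_cartan_h13 : in_cartan h13.
Proof. by split; [exact: in_sl3_h13 | offdiag0]. Qed.

Lemma lie_br_cartan_roots h : in_cartan h ->
  [/\ lie_br h e12 = (h i0 i0 - h i1 i1) *: e12,
      lie_br h f12 = (h i1 i1 - h i0 i0) *: f12,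
      lie_br h e23 = (h i1 i1 - h i2 i2) *: e23 &
      lie_br h e13 = (h i0 i0 - h i2 i2) *: e13].
Proof.
case=> _ hdiag; have h01 := hdiag i0 i1 isT; have h02 := hdiag i0 i2 isT.
have h10 := hdiag i1 i0 isT; have h12' := hdiag i1 i2 isT.
have h20 := hdiag i2 i0 isT; have h21 := hdiag i2 i1 isT.
by split; sl3_unfold; apply/matrixP => i j;
  have [->|->|->] := ord3P i; have [->|->|->] := ord3P j;
  rewrite ?mxE ?sum3 ?mxE /= ?h01 ?h02 ?h10 ?h12' ?h20 ?h21 ?mulr1n ?mulr0n; ring.
Qed.

Lemma lie_br_e12_e13 : lie_br e12 e13 = 0. Proof. sl3_mx. Qed.
Lemma lie_br_e12_e23 : lie_br e12 e23 = - e13. Proof. sl3_mx. Qed.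
Lemma lie_br_e12_f12 : lie_br e12 f12 = h12. Proof. sl3_mx. Qed.
Lemma lie_br_e12_f13 : lie_br e12 f13 = f23. Proof. sl3_mx. Qed.
Lemma lie_br_e23_e12 : lie_br e23 e12 = e13. Proof. sl3_mx. Qed.
Lemma lie_br_e23_e13 : lie_br e23 e13 = 0. Proof. sl3_mx. Qed.
Lemma lie_br_e23_f12 : lie_br e23 f12 = 0. Proof. sl3_mx. Qed.
Lemma lie_br_e23_f23 : lie_br e23 f23 = h23. Proof. sl3_mx. Qed.
Lemma lie_br_e13_e12 : lie_br e13 e12 = 0. Proof. sl3_mx. Qed.
Lemma lie_br_e13_f13 : lie_br e13 f13 = h13. Proof. sl3_mx. Qed.
Lemma lie_br_f12_f12_f12_e12 : lie_br f12 (lie_br f12 (lie_br f12 e12)) = 0.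
Proof.
have -> : lie_br f12 e12 = - h12 by sl3_mx.
have -> : lie_br f12 (- h12) = - 2 *: f12 by sl3_mx.
sl3_mx.
Qed.
Lemma lie_br_f12_e13 : lie_br f12 e13 = - e23. Proof. sl3_mx. Qed.
Lemma lie_br_f12_e23 : lie_br f12 e23 = 0. Proof. sl3_mx. Qed.
Lemma lie_br_f12_f23 : lie_br f12 f23 = f13. Proof. sl3_mx. Qed.
Lemma lie_br_f23_e12 : lie_br f23 e12 = 0. Proof. sl3_mx. Qed.
Lemma lie_br_f13_e12 : lie_br f13 e12 = - f23. Proof. sl3_mx. Qed.
Lemma lie_br_f13_e23 : lie_br f13 e23 = f12. Proof. sl3_mx. Qed.
Lemma lie_br_f13_e13 : lie_br f13 e13 = - h13. Proof. sl3_mx. Qed.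
Lemma lie_br_f13_f12 : lie_br f13 f12 = 0. Proof. sl3_mx. Qed.
Lemma lie_br_h13_e12 : lie_br h13 e12 = e12. Proof. sl3_mx. Qed.
Lemma lie_br_h13_e23 : lie_br h13 e23 = e23. Proof. sl3_mx. Qed.
Lemma lie_br_h13_e13 : lie_br h13 e13 = 2 *: e13. Proof. sl3_mx. Qed.
Lemma lie_br_h12_f12 : lie_br h12 f12 = - 2 *: f12. Proof. sl3_mx. Qed.

Lemma mxtrace_f13_e12 : \tr (f13 *m e12) = 0. Proof. sl3_tr. Qed.
Lemma mxtrace_f13_e23 : \tr (f13 *m e23) = 0. Proof. sl3_tr. Qed.
Lemma mxtrace_f13_e13 : \tr (f13 *m e13) = 1. Proof. sl3_tr. Qed.

Lemma in_nplusE x : in_nplus x ->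
  x = x i0 i1 *: e12 + (x i1 i2 *: e23 + (- x i0 i2) *: e13).
Proof.
move=> xup; have := xup i0 i0 isT; have := xup i1 i1 isT; have := xup i2 i2 isT.
have := xup i1 i0 isT; have := xup i2 i0 isT; have := xup i2 i1 isT.
move=> x21 x20 x10 x22 x11 x00.
sl3_unfold; apply/matrixP => i j; have [->|->|->] := ord3P i; have [->|->|->] := ord3P j;
  rewrite ?mxE /= ?x00 ?x11 ?x22 ?x10 ?x20 ?x21 ?mulr1n ?mulr0n; ring.
Qed.

Lemma in_sl3E x : in_sl3 x ->
  x = x i0 i1 *: e12 + (x i1 i2 *: e23 + ((- x i0 i2) *: e13
    + (x i1 i0 *: f12 + (x i2 i1 *: f23 + ((- x i2 i0) *: f13
    + (x i0 i0 *: h12 + (x i0 i0 + x i1 i1) *: h23)))))).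
Proof.
rewrite /in_sl3 /mxtrace sum3 => tr0.
have x22 : x i2 i2 = - x i0 i0 - x i1 i1 by rewrite -[LHS]subr0 -tr0; ring.
sl3_unfold; apply/matrixP => i j; have [->|->|->] := ord3P i; have [->|->|->] := ord3P j;
  rewrite ?mxE /= ?x22 ?mulr1n ?mulr0n; ring.
Qed.

End Sl3.

#[local] Hint Resolve in_sl3_e12 in_sl3_e23 in_sl3_e13 in_sl3_f12 in_sl3_f23
  in_sl3_f13 in_sl3_h12 in_sl3_h23 in_sl3_h13 in_sl3_lie_br : core.

Section AffineModule.
Variable R : realType.
Local Notation C := (CC R).
Local Notation e12 := (e12 R). Local Notation e23 := (e23 R).
Local Notation e13 := (e13 R). Local Notation f12 := (f12 R).
Local Notation f23 := (f23 R). Local Notation f13 := (f13 R).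
Local Notation h12 := (h12 R). Local Notation h23 := (h23 R).
Local Notation h13 := (h13 R).
Variables (M : lmodType C) (k : C) (act : 'M[C]_3 -> int -> M -> M).
Hypothesis act_aff : affine_module k act.
Implicit Types (x y h : 'M[C]_3) (p q : int) (u : M).

Lemma act_linear x p : in_sl3 x -> linear (act x p).
Proof. by move=> xs a u v; case: act_aff => _ act_lin _; exact: act_lin. Qed.

Lemma act_addZ a x y p u : in_sl3 x -> in_sl3 y ->
  act (a *: x + y) p u = a *: act x p u + act y p u.
Proof. by case: act_aff => act_lin _ _; apply: act_lin. Qed.

Lemma act0 p u : act 0 p u = 0.
Proof.
have sl0 : in_sl3 (0 : 'M[C]_3) by exact: mxtrace0.
have := act_addZ 1 p u sl0 sl0; rewrite scaler0 add0r scale1r => act0D.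
by apply: (addrI (act 0 p u)); rewrite addr0 -act0D.
Qed.

Lemma actZ a x p u : in_sl3 x -> act (a *: x) p u = a *: act x p u.
Proof.
have sl0 : in_sl3 (0 : 'M[C]_3) by exact: mxtrace0.
by move=> xs; have := act_addZ a p u xs sl0; rewrite !addr0 act0 addr0.
Qed.

Lemma actN x p u : in_sl3 x -> act (- x) p u = - act x p u.
Proof. by move=> xs; rewrite -[- x]scaleN1r actZ // scaleN1r. Qed.

Lemma act_comm x y p q u : in_sl3 x -> in_sl3 y ->
  act x p (act y q u) = act y q (act x p u) + act (lie_br x y) (p + q) u
    + ((p%:~R * (if p + q == 0 then 1 else 0) * \tr (x *m y) * k) : C) *: u.
Proof.
case: act_aff => _ _ act_br xs ys.
by rewrite -addrA -(act_br x y p q u xs ys) addrC subrK.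
Qed.

Lemma act_comm_noncentral x y p q u : in_sl3 x -> in_sl3 y ->
  (p == 0) || (p + q != 0) ->
  act x p (act y q u) = act y q (act x p u) + act (lie_br x y) (p + q) u.
Proof.
move=> xs ys /orP pq; rewrite act_comm //.
by case: pq => [/eqP -> | /negPf ->]; rewrite ?mulr0 ?mul0r scale0r addr0.
Qed.

Lemma act_comm0 x y q u : in_sl3 x -> in_sl3 y ->
  act x 0 (act y q u) = act y q (act x 0 u) + act (lie_br x y) q u.
Proof. by move=> xs ys; rewrite act_comm_noncentral ?eqxx ?add0r. Qed.

Lemma act_commute x y p q u : in_sl3 x -> in_sl3 y -> lie_br x y = 0 ->
  (p == 0) || (p + q != 0) -> act x p (act y q u) = act y q (act x p u).
Proof. by move=> xs ys xy pq; rewrite act_comm_noncentral // xy act0 addr0. Qed.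

Lemma act_comm_opp x y p u : in_sl3 x -> in_sl3 y ->
  act x p (act y (- p) u) = act y (- p) (act x p u) + act (lie_br x y) 0 u
    + (p%:~R * \tr (x *m y) * k) *: u.
Proof. by move=> xs ys; rewrite act_comm // subrr eqxx mulr1. Qed.

Lemma act_root h y c q : in_sl3 h -> in_sl3 y -> lie_br h y = c *: y ->
  forall u, act h 0 (act y q u) = act y q (act h 0 u) + c *: act y q u.
Proof. by move=> hs ys hy u; rewrite act_comm0 // hy actZ. Qed.

Section Vacuum.
Variable w : M.
Hypothesis w_vac : vacuum_like act w.

Local Notation E := (act e12 (-1)).
Local Notation F := (act f12 0).
Local Notation B := (act e23 (-1)).
Local Notation A := (act e13 (-1)).

Definition monomial i j l m : M := iter i A (iter j B (iter l F (iter m E w))).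

Let E_lin : linear E := act_linear (-1) (in_sl3_e12 R).
Let F_lin : linear F := act_linear 0 (in_sl3_f12 R).
Let B_lin : linear B := act_linear (-1) (in_sl3_e23 R).
Let A_lin : linear A := act_linear (-1) (in_sl3_e13 R).

Lemma B_A u : B (A u) = A (B u).
Proof. by rewrite act_commute // lie_br_e23_e13. Qed.

Lemma iter_B_A j u : iter j B (A u) = A (iter j B u).
Proof. by rewrite (iter_commute _ _ (fun v => esym (B_A v))). Qed.

Lemma monomial_eigen h i j l m : in_cartan h ->
  act h 0 (monomial i j l m) =
    ((m%:R - l%:R) * (h i0 i0 - h i1 i1) + j%:R * (h i1 i1 - h i2 i2)
     + i%:R * (h i0 i0 - h i2 i2)) *: monomial i j l m.
Proof.
move=> hc; have [hs _] := hc; have [he12 hf12 he23 he13] := lie_br_cartan_roots hc.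
have w0 : act h 0 w = 0 *: w by rewrite scale0r w_vac.
have wE := eigen_iter m E_lin (act_root (-1) hs (in_sl3_e12 R) he12) w0.
have wF := eigen_iter l F_lin (act_root 0 hs (in_sl3_f12 R) hf12) wE.
have wB := eigen_iter j B_lin (act_root (-1) hs (in_sl3_e23 R) he23) wF.
rewrite /monomial (eigen_iter i A_lin (act_root (-1) hs (in_sl3_e13 R) he13) wB).
by congr (_ *: _); ring.
Qed.

Lemma act_e12_iter_e12 m : act e12 0 (iter m E w) = 0.
Proof.
have e12_E u : act e12 0 (E u) = E (act e12 0 u) by rewrite act_commute // /lie_br subrr.
by rewrite (iter_commute _ _ e12_E) w_vac // (lin_op_iter0 E_lin).
Qed.

Lemma act_e12_monomial i j l m :
  act e12 0 (monomial i j l m) =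
    (l%:R * ((2 * m)%:R - l%:R + 1)) *: monomial i j l.-1 m
    - j%:R *: monomial i.+1 j.-1 l m.
Proof.
have e12_A u : act e12 0 (A u) = A (act e12 0 u).
  by rewrite act_commute // lie_br_e12_e13.
have e12_B u : act e12 0 (B u) = B (act e12 0 u) + - A u.
  by rewrite act_comm0 // lie_br_e12_e23 actN.
have A_B u : - A (B u) = B (- A u) by rewrite (lin_opN B_lin) B_A.
have e12_F u : act e12 0 (F u) = F (act e12 0 u) + act h12 0 u.
  by rewrite act_comm0 // lie_br_e12_f12.
have h12_F u : act h12 0 (F u) = F (act h12 0 u) - 2 *: F u.
  by rewrite (act_root 0 _ _ (lie_br_h12_f12 R)) // scaleNr.
have h12_E : act h12 0 (iter m E w) = (2 * m)%:R *: iter m E w.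
  rewrite (monomial_eigen 0 0 0 m (in_cartan_h12 R)); congr (_ *: _).
  by rewrite !mxE /= natrM; ring.
rewrite /monomial (iter_commute _ _ e12_A) (commutator_iter _ _ B_lin e12_B A_B).
rewrite (sl2_commutator_iter _ F_lin e12_F h12_F h12_E) act_e12_iter_e12.
rewrite (lin_op_iter0 F_lin) add0r (lin_opN (linear_iter B_lin _)).
rewrite iter_B_A (lin_opZ (linear_iter B_lin _)) scalerN.
by rewrite (lin_opB (linear_iter A_lin i)) !(lin_opZ (linear_iter A_lin i)) -iterSr.
Qed.

Lemma act_e23_monomial i j l m :
  act e23 0 (monomial i j l m) =
    m%:R *: (monomial i.+1 j l m.-1 - l%:R *: monomial i j.+1 l.-1 m.-1).
Proof.
have e23_A u : act e23 0 (A u) = A (act e23 0 u).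
  by rewrite act_commute // lie_br_e23_e13.
have e23_B u : act e23 0 (B u) = B (act e23 0 u).
  by rewrite act_commute // /lie_br subrr.
have e23_F u : act e23 0 (F u) = F (act e23 0 u).
  by rewrite act_commute // lie_br_e23_f12.
have e23_E u : act e23 0 (E u) = E (act e23 0 u) + A u.
  by rewrite act_comm0 // lie_br_e23_e12.
have A_E u : A (E u) = E (A u) by rewrite act_commute // lie_br_e13_e12.
have F_A u : F (A u) = A (F u) + - B u by rewrite act_comm0 // lie_br_f12_e13 actN.
have F_B u : F (- B u) = - B (F u) + 0.
  by rewrite addr0 (lin_opN F_lin) act_commute // lie_br_f12_e23.
have F_0 (u : M) : F 0 = 0 by exact: lin_op0 F_lin.
rewrite /monomial (iter_commute _ _ e23_A) (iter_commute _ _ e23_B).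
rewrite (iter_commute _ _ e23_F).
rewrite (commutator_iter _ _ E_lin e23_E A_E) w_vac // !(lin_op_iter0 E_lin).
rewrite add0r -(iter_commute _ _ A_E) (lin_opZ (linear_iter F_lin _)).
rewrite (iter_commutator _ _ F_lin F_A F_B F_0) scaler0 addr0 scalerN.
rewrite (lin_opZ (linear_iter B_lin j)) (lin_opB (linear_iter B_lin j)).
rewrite (lin_opZ (linear_iter B_lin j)) iter_B_A -[iter j B (B _)]iterSr.
rewrite (lin_opZ (linear_iter A_lin i)) (lin_opB (linear_iter A_lin i)).
by rewrite (lin_opZ (linear_iter A_lin i)) -iterSr.
Qed.

Lemma act_f13_iter_f12_e12 l m : act f13 1 (iter l F (iter m E w)) = 0.
Proof.
have f13_F u : act f13 1 (F u) = F (act f13 1 u).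
  by rewrite act_commute // lie_br_f13_f12.
have f13_E u : act f13 1 (E u) = E (act f13 1 u) + - act f23 0 u.
  rewrite act_comm_opp // mxtrace_f13_e12 mulr0 mul0r scale0r addr0.
  by rewrite lie_br_f13_e12 actN.
have f23_E u : - act f23 0 (E u) = E (- act f23 0 u).
  by rewrite (lin_opN E_lin) act_commute // lie_br_f23_e12.
rewrite (iter_commute _ _ f13_F) (commutator_iter _ _ E_lin f13_E f23_E) !w_vac //.
by rewrite oppr0 !(lin_op_iter0 E_lin) scaler0 addr0 (lin_op_iter0 F_lin).
Qed.

Lemma act_f13_monomial i j l m :
  act f13 1 (monomial i j l m) =
    j%:R *: monomial i j.-1 l.+1 m
    + (i%:R * (k + l%:R - j%:R - m%:R - i%:R + 1)) *: monomial i.-1 j l m.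
Proof.
have f13_B u : act f13 1 (B u) = B (act f13 1 u) + F u.
  rewrite act_comm_opp // mxtrace_f13_e23 mulr0 mul0r scale0r addr0.
  by rewrite lie_br_f13_e23.
have F_B u : F (B u) = B (F u) by rewrite act_commute // lie_br_f12_e23.
(* (f13(1), e13(-1), k - h13(0)) is an sl_2-triple: the level is the central
   term of [f13(1), e13(-1)]. *)
pose H u := k *: u - act h13 0 u.
have f13_A u : act f13 1 (A u) = A (act f13 1 u) + H u.
  rewrite act_comm_opp // mxtrace_f13_e13 lie_br_f13_e13 actN //.
  by rewrite (_ : 1%:~R = 1 :> C) // mulr1 mul1r /H addrA addrAC.
have H_A u : H (A u) = A (H u) - 2 *: A u.
  rewrite /H (act_root (-1) _ _ (lie_br_h13_e13 R)) // (lin_opB A_lin) (lin_opZ A_lin).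
  by rewrite opprD addrA.
have H_u : H (iter j B (iter l F (iter m E w))) =
    (k + l%:R - j%:R - m%:R) *: iter j B (iter l F (iter m E w)).
  rewrite /H (monomial_eigen 0 j l m (in_cartan_h13 R)) -scalerBl.
  by congr (_ *: _); rewrite !mxE /=; ring.
rewrite /monomial (sl2_commutator_iter _ A_lin f13_A H_A H_u).
rewrite (commutator_iter _ _ B_lin f13_B F_B) act_f13_iter_f12_e12.
by rewrite (lin_op_iter0 B_lin) add0r (lin_opZ (linear_iter A_lin _)).
Qed.

Lemma iter_f12_iter_e12 l m : (2 * m < l)%N -> iter l F (iter m E w) = 0.
Proof.
have F_E u : F (E u) = E (F u) + act (lie_br f12 e12) (-1) u by rewrite act_comm0.
have F_E1 u : F (act (lie_br f12 e12) (-1) u) =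
    act (lie_br f12 e12) (-1) (F u) + act (lie_br f12 (lie_br f12 e12)) (-1) u.
  by rewrite act_comm0.
have F_E2 u : F (act (lie_br f12 (lie_br f12 e12)) (-1) u) =
    act (lie_br f12 (lie_br f12 e12)) (-1) (F u).
  by rewrite act_commute // lie_br_f12_f12_f12_e12.
elim: m l => [|m IH] [|l] // lt_ml.
  by rewrite iterSr w_vac // (lin_op_iter0 F_lin).
rewrite [iter m.+1 _ _]iterS (iter_commutator _ _ F_lin F_E F_E1 F_E2) !IH; try lia.
by rewrite (lin_op0 E_lin) !(lin_op0 (act_linear _ _)) // !scaler0 !addr0.
Qed.

Section V2n.
Variable n : nat.

Lemma v2nE :
  v2n act n w = \sum_(t < (2 * n).+1) (t`!)%:R^-1 *: monomial t (2 * n - t) t n.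
Proof. by []. Qed.

Lemma act_v2n x p : in_sl3 x ->
  act x p (v2n act n w) =
    \sum_(t < (2 * n).+1) (t`!)%:R^-1 *: act x p (monomial t (2 * n - t) t n).
Proof.
move=> xs; rewrite v2nE (lin_op_sum (act_linear p xs)).
by apply: eq_bigr => t _; rewrite (lin_opZ (act_linear p xs)).
Qed.

Lemma v2n_eigen h : in_cartan h ->
  act h 0 (v2n act n w) =
    (n%:R * (h i0 i0 - h i1 i1) + (2 * n)%:R * (h i1 i1 - h i2 i2)) *: v2n act n w.
Proof.
move=> hc; have [hs _] := hc.
rewrite act_v2n // v2nE scaler_sumr; apply: eq_bigr => t _.
have t_le : (t <= 2 * n)%N := ltn_ord t.
by rewrite monomial_eigen // !scalerA natrB // natrM; congr (_ *: _); ring.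
Qed.

Lemma act_e12_v2n : act e12 0 (v2n act n w) = 0.
Proof.
pose c s : C := (s`!)%:R^-1 * (s%:R * ((2 * n)%:R - s%:R + 1)).
rewrite act_v2n //.
apply: (telescope_sum_eq0 (f := fun s => - (c s *: monomial s (2 * n - s) s.-1 n))).
- by rewrite /c mul0r mulr0 scale0r oppr0.
- rewrite /c (_ : (2 * n)%:R - (2 * n).+1%:R + 1 = 0); last by rewrite -natr1; ring.
  by rewrite !mulr0 scale0r oppr0.
move=> t; have t_le : (t <= 2 * n)%N := ltn_ord t.
rewrite act_e12_monomial -subnS scalerBr !scalerA opprK [RHS]addrC.
congr (_ *: _ - _ *: _).
by rewrite /c mulrA natr_invfactS natrB // -natr1; congr (_ * _); ring.
Qed.

Lemma act_e23_v2n : (0 < n)%N -> act e23 0 (v2n act n w) = 0.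
Proof.
move=> n_gt0; pose c s : C := (s`!)%:R^-1 * (n%:R * s%:R).
rewrite act_v2n //.
apply: (telescope_sum_eq0 (f := fun s => c s *: monomial s ((2 * n).+1 - s) s.-1 n.-1)).
- by rewrite /c !mulr0 scale0r.
- rewrite subnn /monomial iter_f12_iter_e12; last by lia.
  by rewrite (lin_op_iter0 B_lin) (lin_op_iter0 A_lin) scaler0.
move=> t; have t_le : (t <= 2 * n)%N := ltn_ord t.
rewrite act_e23_monomial subSS -subSn // scalerA scalerBr scalerA.
congr (_ *: _ - _ *: _); last by rewrite /c mulrA.
by rewrite /c mulrCA natr_invfactS mulrC.
Qed.

Lemma act_f13_v2n : k = n%:R - 2 -> act f13 1 (v2n act n w) = 0.
Proof.
move=> k_level; pose c s : C := (s`!)%:R^-1 * (s%:R * (s%:R - (2 * n)%:R - 1)).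
rewrite act_v2n //.
apply: (telescope_sum_eq0 (f := fun s => - (c s *: monomial s.-1 (2 * n - s) s n))).
- by rewrite /c mul0r mulr0 scale0r oppr0.
- rewrite /c (_ : (2 * n).+1%:R - (2 * n)%:R - 1 = 0); last by rewrite -natr1; ring.
  by rewrite !mulr0 scale0r oppr0.
move=> t; have t_le : (t <= 2 * n)%N := ltn_ord t.
rewrite act_f13_monomial -subnS scalerDr !scalerA opprK -scaleNr.
congr (_ *: _ + _ *: _).
  by rewrite /c mulrA natr_invfactS natrB // -natr1 -mulrN; congr (_ * _); ring.
by rewrite /c k_level natrB // natrM; congr (_ * _); ring.
Qed.

End V2n.

End Vacuum.

Lemma act_lie_br_eq0 x y p q u : in_sl3 x -> in_sl3 y -> (p == 0) || (p + q != 0) ->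
  act x p u = 0 -> act y q u = 0 -> act (lie_br x y) (p + q) u = 0.
Proof.
move=> xs ys pq xu yu; have := act_comm_noncentral u xs ys pq.
by rewrite xu yu (lin_op0 (act_linear _ xs)) (lin_op0 (act_linear _ ys)) add0r.
Qed.

Lemma act_eq0_sl3 p u :
  act e12 p u = 0 -> act e23 p u = 0 -> act e13 p u = 0 -> act f12 p u = 0 ->
  act f23 p u = 0 -> act f13 p u = 0 -> act h12 p u = 0 -> act h23 p u = 0 ->
  forall x, in_sl3 x -> act x p u = 0.
Proof.
move=> ue12 ue23 ue13 uf12 uf23 uf13 uh12 uh23 x /in_sl3E ->.
rewrite !act_addZ ?actZ ?ue12 ?ue23 ?ue13 ?uf12 ?uf23 ?uf13 ?uh12 ?uh23
  ?scaler0 ?addr0 //.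
all: by do ![apply: in_sl3_addZ | apply: in_sl3Z].
Qed.

Lemma act_eq0_nplus p u :
  act e12 p u = 0 -> act e23 p u = 0 -> act e13 p u = 0 ->
  forall x, in_nplus x -> act x p u = 0.
Proof.
move=> ue12 ue23 ue13 x /in_nplusE ->.
rewrite !act_addZ ?actZ ?ue12 ?ue23 ?ue13 ?scaler0 ?addr0 //.
all: by do ![apply: in_sl3_addZ | apply: in_sl3Z].
Qed.

Section Generation.
Variable v : M.
Hypotheses (v_e12 : act e12 0 v = 0) (v_e23 : act e23 0 v = 0).
Hypothesis v_f13 : act f13 1 v = 0.

Lemma act_e13_eq0 : act e13 0 v = 0.
Proof. by rewrite -lie_br_e23_e12; apply: (act_lie_br_eq0 (p := 0) (q := 0)). Qed.

Lemma act_nplus_eq0 x : in_nplus x -> act x 0 v = 0.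
Proof. exact: act_eq0_nplus act_e13_eq0 x. Qed.

Lemma act_mode1_eq0 x : in_sl3 x -> act x 1 v = 0.
Proof.
have v_e13 := act_e13_eq0.
have br01 x1 y1 : in_sl3 x1 -> in_sl3 y1 -> act x1 0 v = 0 -> act y1 1 v = 0 ->
    act (lie_br x1 y1) 1 v = 0.
  by move=> xs ys; exact: (act_lie_br_eq0 (p := 0) (q := 1)).
have br10 x1 y1 : in_sl3 x1 -> in_sl3 y1 -> act x1 1 v = 0 -> act y1 0 v = 0 ->
    act (lie_br x1 y1) 1 v = 0.
  by move=> xs ys; exact: (act_lie_br_eq0 (p := 1) (q := 0)).
have f23_1 : act f23 1 v = 0 by rewrite -lie_br_e12_f13 br01.
have f12_1 : act f12 1 v = 0 by rewrite -lie_br_f13_e23 br10.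
have h13_1 : act h13 1 v = 0 by rewrite -lie_br_e13_f13 br01.
have e12_1 : act e12 1 v = 0 by rewrite -lie_br_h13_e12 br10.
have e23_1 : act e23 1 v = 0 by rewrite -lie_br_h13_e23 br10.
apply: act_eq0_sl3 => //.
- by rewrite -lie_br_e23_e12 br10.
- by rewrite -lie_br_e12_f12 br01.
- by rewrite -lie_br_e23_f23 br01.
Qed.

Lemma act_modeS_eq0 (m : nat) : (forall x, in_sl3 x -> act x m.+1 v = 0) ->
  forall x, in_sl3 x -> act x m.+2 v = 0.
Proof.
move=> vm; have br x y : in_sl3 x -> in_sl3 y -> act (lie_br x y) m.+2 v = 0.
  move=> xs ys; apply: (act_lie_br_eq0 (p := 1) (q := m.+1)) => //.
    exact: act_mode1_eq0.
  exact: vm.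
apply: act_eq0_sl3.
- by rewrite -lie_br_h13_e12 br.
- by rewrite -lie_br_h13_e23 br.
- by rewrite -lie_br_e23_e12 br.
- by rewrite -lie_br_f13_e23 br.
- by rewrite -lie_br_e12_f13 br.
- by rewrite -lie_br_f12_f23 br.
- by rewrite -lie_br_e12_f12 br.
- by rewrite -lie_br_e23_f23 br.
Qed.

Lemma act_pos_eq0 x (p : int) : in_sl3 x -> 0 < p -> act x p v = 0.
Proof.
case: p => [[|m]|//] xs _ //.
elim: m x xs => [|m IH]; first exact: act_mode1_eq0.
exact: act_modeS_eq0.
Qed.

End Generation.
End AffineModule.

Theorem theorem6p1 (R : realType) (n : nat) (M : lmodType (CC R))
    (act : 'M[CC R]_3 -> int -> M -> M) (w : M) :
  (0 < n)%N ->
  affine_module (n%:R - 2) act ->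
  vacuum_like act w ->
  singular act (v2n act n w).
Proof.
move=> n_gt0 act_aff w_vac.
have v_e12 := act_e12_v2n act_aff w_vac n.
have v_e23 := act_e23_v2n act_aff w_vac n_gt0.
have v_f13 := act_f13_v2n act_aff w_vac (erefl _).
split.
- exists (fun h => n%:R * (h i0 i0 - h i1 i1) + (2 * n)%:R * (h i1 i1 - h i2 i2)).
  by move=> h /(v2n_eigen act_aff w_vac n).
- by move=> x /(act_nplus_eq0 act_aff v_e12 v_e23).
- by move=> x m xs /(act_pos_eq0 act_aff v_e12 v_e23 v_f13 xs).
Qed.
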